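(* If a natural number $n\ge2$ satisfies Robin's inequality $\sigma(n)<e^\gamma n\log(\log n)$, then $n$ satisfies the Kaneko–Lagarias inequality $\sigma(n)<\exp(H_n)\log(H_n)$ (and hence also the Lagarias inequality $\sigma(n)<H_n+\exp(H_n)\log(H_n)$).
   Context: $\sigma(n)=\sum_{d\mid n}d$ is the sum-of-divisors function, $H_n=1+\frac12+\cdots+\frac1n$ is the $n$-th harmonic number, and $\gamma$ is the Euler–Mascheroni constant. *)

From Stdlib Require Import Reals Lra Lia List.
From Coquelicot Require Import Coquelicot.
Open Scope R_scope.

Definition sigma_div (n : nat) : nat :=
  fold_right Nat.add 0%nat
    (filter (fun d => Nat.eqb (Nat.modulo n d) 0) (List.seq 1 n)).

Definition harmonic (n : nat) : R :=
  fold_right Rplus 0 (map (fun k => / INR k) (List.seq 1 n)).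

Definition euler_gamma : R :=
  real (Lim_seq (fun n => harmonic n - ln (INR n))).

(** The sequence [H_n - ln n] decreases (from [ln (1 + 1/n) >= 1/(n+1)]) and stays
    nonnegative (from [H_n >= ln (n+1)]), so its limit [gamma] is at most each term:
    [exp gamma * n <= exp H_n]. Moreover [ln n < H_n], and Robin's inequality forces
    [ln (ln n) > 0]; multiplying the two comparisons gives
    [exp gamma * n * ln (ln n) < exp H_n * ln H_n], and [H_n > 0] gives the weaker form. *)
From Stdlib Require Import Reals Lra Lia List.
From Coquelicot Require Import Coquelicot.
Open Scope R_scope.

Lemma ln_le_sub_1 (x : R) : 0 < x -> ln x <= x - 1.
Proof.
  intros Hx.
  rewrite <- (ln_exp (x - 1)).
  apply ln_le; [exact Hx|].
  pose proof (exp_ineq1_le (x - 1)); lra.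
Qed.

Lemma ln_succ_sub_le_inv (x : R) : 0 < x -> ln (x + 1) - ln x <= / x.
Proof.
  intros Hx.
  rewrite <- ln_div by lra.
  replace (/ x) with ((x + 1) / x - 1) by (field; lra).
  apply ln_le_sub_1, Rdiv_lt_0_compat; lra.
Qed.

Lemma inv_succ_le_ln_succ_sub (x : R) : 0 < x -> / (x + 1) <= ln (x + 1) - ln x.
Proof.
  intros Hx.
  replace (ln (x + 1) - ln x) with (- ln (x / (x + 1))) by (rewrite ln_div; lra).
  replace (/ (x + 1)) with (- (x / (x + 1) - 1)) by (field; lra).
  apply Ropp_le_contravar, ln_le_sub_1, Rdiv_lt_0_compat; lra.
Qed.

Lemma harmonic_S (n : nat) : harmonic (S n) = harmonic n + / INR (S n).
Proof.
  assert (fold_acc : forall (l : list R) a, fold_right Rplus a l = fold_right Rplus 0 l + a).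
  { induction l as [|x l IH]; intros a; simpl; [lra | rewrite IH; lra]. }
  unfold harmonic. rewrite seq_S, map_app, fold_right_app; simpl.
  rewrite fold_acc. replace (1 + n)%nat with (S n) by lia. lra.
Qed.

Lemma ln_succ_le_harmonic (n : nat) : ln (INR (S n)) <= harmonic n.
Proof.
  induction n as [|n IH].
  - unfold harmonic; simpl. rewrite ln_1. lra.
  - rewrite harmonic_S, S_INR.
    assert (Hn : 0 < INR (S n)) by (apply lt_0_INR; lia).
    pose proof (ln_succ_sub_le_inv (INR (S n)) Hn). lra.
Qed.

Lemma ln_lt_harmonic (n : nat) : (1 <= n)%nat -> ln (INR n) < harmonic n.
Proof.
  intros Hn.
  assert (ln (INR n) < ln (INR (S n))).
  { apply ln_increasing; [apply lt_0_INR; lia | rewrite S_INR; lra]. }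
  pose proof (ln_succ_le_harmonic n). lra.
Qed.

Lemma harmonic_sub_ln_S_le (n : nat) :
  (1 <= n)%nat -> harmonic (S n) - ln (INR (S n)) <= harmonic n - ln (INR n).
Proof.
  intros Hn.
  rewrite harmonic_S, S_INR.
  assert (Hpos : 0 < INR n) by (apply lt_0_INR; lia).
  pose proof (inv_succ_le_ln_succ_sub (INR n) Hpos). lra.
Qed.

Lemma harmonic_sub_ln_le (n m : nat) :
  (1 <= n)%nat -> (n <= m)%nat -> harmonic m - ln (INR m) <= harmonic n - ln (INR n).
Proof.
  intros Hn Hm. induction Hm as [|m Hm IH]; [lra|].
  pose proof (harmonic_sub_ln_S_le m ltac:(lia)). lra.
Qed.

(* A lower bound [0 <= u N] is needed because [real] maps [-oo] to [0]. *)
Lemma real_Lim_seq_le (u : nat -> R) (N : nat) :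
  0 <= u N -> (forall m, (N <= m)%nat -> u m <= u N) -> real (Lim_seq u) <= u N.
Proof.
  intros HuN Hdec.
  assert (Hle : Rbar_le (Lim_seq u) (Lim_seq (fun _ => u N))).
  { apply Lim_seq_le_loc. exists N. exact Hdec. }
  rewrite Lim_seq_const in Hle.
  destruct (Lim_seq u) as [l| |]; simpl in *; [exact Hle | contradiction | exact HuN].
Qed.

Lemma euler_gamma_le (n : nat) : (1 <= n)%nat -> euler_gamma <= harmonic n - ln (INR n).
Proof.
  intros Hn. apply (real_Lim_seq_le (fun k => harmonic k - ln (INR k)) n).
  - pose proof (ln_lt_harmonic n Hn). lra.
  - intros m Hm. exact (harmonic_sub_ln_le n m Hn Hm).
Qed.

Lemma exp_euler_gamma_mul_le (n : nat) :
  (1 <= n)%nat -> exp euler_gamma * INR n <= exp (harmonic n).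
Proof.
  intros Hn.
  assert (Hpos : 0 < INR n) by (apply lt_0_INR; lia).
  rewrite <- (exp_ln (INR n)) at 1 by exact Hpos.
  rewrite <- exp_plus.
  pose proof (euler_gamma_le n Hn) as Hgamma.
  destruct (Rle_lt_or_eq_dec (euler_gamma + ln (INR n)) (harmonic n)) as [Hlt | Heq].
  - lra.
  - exact (Rlt_le _ _ (exp_increasing _ _ Hlt)).
  - rewrite Heq; lra.
Qed.

Theorem mainTheorem20 (n : nat) :
  (2 <= n)%nat ->
  INR (sigma_div n) < exp euler_gamma * INR n * ln (ln (INR n)) ->
  INR (sigma_div n) < exp (harmonic n) * ln (harmonic n) /\
  INR (sigma_div n) < harmonic n + exp (harmonic n) * ln (harmonic n).
Proof.
  intros Hn Hrobin.
  assert (Hsigma : 0 <= INR (sigma_div n)) by apply pos_INR.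
  assert (Hscale : 0 < exp euler_gamma * INR n).
  { apply Rmult_lt_0_compat; [apply exp_pos | apply lt_0_INR; lia]. }
  assert (Hlnln : 0 < ln (ln (INR n))).
  { destruct (Rlt_or_le 0 (ln (ln (INR n)))) as [Hlt | Hle]; [exact Hlt|].
    pose proof (Rmult_le_compat_l _ _ _ (Rlt_le _ _ Hscale) Hle). lra. }
  assert (Hln : 0 < ln (INR n)).
  { rewrite <- ln_1. apply ln_increasing; [lra | apply (lt_INR 1); lia]. }
  pose proof (ln_lt_harmonic n ltac:(lia)) as HlnH.
  assert (Hlog : ln (ln (INR n)) < ln (harmonic n)) by (apply ln_increasing; lra).
  pose proof (exp_euler_gamma_mul_le n ltac:(lia)) as Hexp.
  assert (Hkl : INR (sigma_div n) < exp (harmonic n) * ln (harmonic n)) by nra.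
  split; [exact Hkl | lra].
Qed.
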